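(* Let $d\ge 2$ and let $g:[-1,1]\to(-\infty,\infty]$ be a function that is finite and continuous on $[-1,1)$ with $g(1)=\lim_{t\to1^-}g(t)$, differentiable on $(-1,1)$, and such that $g''$ exists, is convex on $(-1,1)$ and is strictly positive on $(-1,1)$. Let $\omega_{2d}$ be an antipodal configuration of $2d$ points on $S^{d-1}$. Then $$P^g(\omega_{2d},S^{d-1})= d\left(g\left(\tfrac1{\sqrt d}\right)+g\left(-\tfrac1{\sqrt d}\right)\right)$$ holds if and only if $\omega_{2d}$ is the set of vertices of a regular cross-polytope inscribed in $S^{d-1}$, i.e. $\omega_{2d}=\{\pm\mathbf a_1,\ldots,\pm\mathbf a_d\}$ for some orthonormal basis $\{\mathbf a_1,\ldots,\mathbf a_d\}$ of $\mathbb R^d$.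
   Context: $S^{d-1}$ is the unit sphere in $\mathbb R^d$. A configuration is a list of points (points may coincide); it is antipodal if together with $\mathbf x$ it contains $-\mathbf x$. For a configuration $\omega_N=\{\mathbf x_1,\ldots,\mathbf x_N\}\subset S^{d-1}$, $P^g(\omega_N,S^{d-1}):=\min_{\mathbf x\in S^{d-1}}\sum_{i=1}^N g(\mathbf x\cdot\mathbf x_i)$. (Under these hypotheses one always has $P^g(\omega_{2d},S^{d-1})\le d(g(1/\sqrt d)+g(-1/\sqrt d))$ for antipodal $\omega_{2d}$.) *)

From HB Require Import structures.
From mathcomp Require Import all_boot all_order all_algebra.
From mathcomp Require Import all_classical all_reals all_analysis.
Set Implicit Arguments. Unset Strict Implicit. Unset Printing Implicit Defensive.
Import Order.TTheory GRing.Theory Num.Theory.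
Local Open Scope classical_set_scope.
Local Open Scope ring_scope.

Definition dotv (R : realType) (d : nat) (x y : 'rV[R]_d) : R :=
  \sum_(i < d) x ord0 i * y ord0 i.

Definition sphere (R : realType) (d : nat) : set 'rV[R]_d :=
  [set x | dotv x x = 1].

(* A configuration is a list of points (with repetitions); it is antipodal
   if -omega = omega as multisets. *)
Definition antipodal (R : realType) (d : nat) (w : seq 'rV[R]_d) : bool :=
  perm_eq w (map (fun x => - x) w).

(* P^g(omega, S^{d-1}) := min over x in the sphere of sum_i g(x . x_i),
   taken in the extended reals (written as the infimum, which is attained). *)
Definition polarization (R : realType) (d : nat) (g : R -> \bar R)
    (w : seq 'rV[R]_d) : \bar R :=
  ereal_inf [set (\sum_(y <- w) g (dotv x y))%E | x in @sphere R d].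

Definition cross_polytope (R : realType) (d : nat) (w : seq 'rV[R]_d) : Prop :=
  exists a : 'I_d -> 'rV[R]_d,
    (forall i j, dotv (a i) (a j) = (i == j)%:R) /\
    perm_eq w ([seq a k | k <- enum 'I_d] ++ [seq - a k | k <- enum 'I_d]).

(* The real-valued function underlying g (meaningful where g is finite). *)
Definition greal (R : realType) (g : R -> \bar R) : R -> R := fun t => fine (g t).

(* Write F t = g t + g (-t). Convexity of g'' makes F'' nondecreasing on [0, 1),
   so F'(t)/t is nondecreasing there; hence F is strictly increasing on [0, 1) and
   lies above the even parabola F c + K (t^2 - c^2) touching it at c = 1/sqrt d.
   Pairing antipodal points, w = {+-a_k} and the potential at x is
   sum_k F (x . a_k).  If the a_k are orthonormal, sum_k (x . a_k)^2 = 1 = d c^2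
   on the sphere, so the parabola bound gives P >= d F c, attained at
   x = c sum_k a_k.  Otherwise some x on the sphere has |x . a_k| = s < c for
   all k: x is orthogonal to all a_k if they are dependent, and otherwise x is
   proportional to v = sum_j (+-) z_j for the dual basis z, with the signs chosen
   so that |v|^2 >= sum_j |z_j|^2 > d.  Then P <= d F s < d F c. *)

From HB Require Import structures.
From mathcomp Require Import all_boot all_order all_algebra.
From mathcomp Require Import all_classical all_reals all_analysis.
From mathcomp Require Import ring lra.
Import Order.TTheory GRing.Theory Num.Theory.
Local Open Scope classical_set_scope.
Local Open Scope ring_scope.

Section DerivativesOnOpenUnitInterval.
Context {R : realType}.
Implicit Types (f df : R -> R) (a b x : R).

Lemma is_derive_compN f (df x : R) :
  is_derive (- x) 1 f df -> is_derive x 1 (fun t => f (- t)) (- df).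
Proof.
move=> fx; have dfx : derivable f (- x) 1 by [].
have dN : derivable (-%R : R -> R) x 1 by [].
apply: DeriveDef.
  by apply/derivable1_diffP/differentiable_comp; exact/derivable1_diffP.
have := derive1_comp dN dfx; rewrite !derive1E /= => ->.
by rewrite !derive_val mulrN1.
Qed.

Lemma MVT_unit_itv {f df a b} : -1 < a -> a < b -> b < 1 ->
  (forall t : R, -1 < t < 1 -> is_derive t 1 f (df t)) ->
  exists2 c, a < c < b & f b - f a = df c * (b - a).
Proof.
move=> a_gt ab b_lt fdf.
have inside (t : R) : a <= t <= b -> -1 < t < 1 by case/andP => ? ?; apply/andP; split; lra.
have [|c|c] := @MVT R f df a b ab.
- move=> t; rewrite in_itv /= => /andP[? ?].
  by apply/fdf/inside; apply/andP; split; exact: ltW.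
- by apply: derivable_within_continuous => t; rewrite in_itv /= => /inside/fdf.
- by rewrite in_itv /=; exists c.
Qed.

End DerivativesOnOpenUnitInterval.

Section ConvexSecondDerivative.
Context {R : realType} {G G1 G2 : R -> R}.
Hypothesis dG : forall t : R, -1 < t < 1 -> is_derive t 1 G (G1 t).
Hypothesis dG1 : forall t : R, -1 < t < 1 -> is_derive t 1 G1 (G2 t).
Hypothesis G2_gt0 : forall t : R, -1 < t < 1 -> 0 < G2 t.
Hypothesis G2_convex : forall x y l : R, -1 < x < 1 -> -1 < y < 1 -> 0 <= l <= 1 ->
  G2 (l * x + (1 - l) * y) <= l * G2 x + (1 - l) * G2 y.

Local Notation F t := (G t + G (- t)).
Local Notation F1 t := (G1 t - G1 (- t)).
Local Notation F2 t := (G2 t + G2 (- t)).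

Lemma is_derive_even_sum (t : R) : -1 < t < 1 -> is_derive t 1 (fun x => F x) (F1 t).
Proof.
move=> /andP[? ?]; apply: is_deriveD; first by apply: dG; apply/andP; split.
by apply/is_derive_compN/dG; apply/andP; split; lra.
Qed.

Lemma is_derive_deriv_even_sum (t : R) : -1 < t < 1 -> is_derive t 1 (fun x => F1 x) (F2 t).
Proof.
move=> /andP[? ?]; rewrite -[G2 (- t)]opprK.
apply: is_deriveB; first by apply: dG1; apply/andP; split.
by apply/is_derive_compN/dG1; apply/andP; split; lra.
Qed.

Lemma deriv_lt (a b : R) : -1 < a -> a < b -> b < 1 -> G1 a < G1 b.
Proof.
move=> a_gt ab b_lt; rewrite -subr_gt0.
have [c /andP[? ?] ->] := MVT_unit_itv a_gt ab b_lt dG1.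
by rewrite mulr_gt0 ?subr_gt0 ?G2_gt0 //; apply/andP; split; lra.
Qed.

Lemma even_sum_lt (s t : R) : 0 <= s -> s < t -> t < 1 -> F s < F t.
Proof.
move=> ? st t_lt; rewrite -subr_gt0.
have s_gt : -1 < s by lra.
have [c /andP[? ?] ->] := MVT_unit_itv s_gt st t_lt is_derive_even_sum.
by rewrite mulr_gt0 ?subr_gt0 //; apply: deriv_lt; lra.
Qed.

Lemma second_deriv_even_sum_le (s t : R) : 0 <= s -> s <= t -> t < 1 -> F2 s <= F2 t.
Proof.
move=> s_ge0 st t_lt; have [t0|t_neq0] := eqVneq t 0; first by have -> : s = t by lra.
pose l := (t + s) / (2 * t).
have l01 : 0 <= l <= 1.
  by apply/andP; split; [apply: divr_ge0 | rewrite ler_pdivrMr ?mul1r]; lra.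
have l'01 : 0 <= 1 - l <= 1 by lra.
have t1 : -1 < t < 1 by apply/andP; split; lra.
have Nt1 : -1 < - t < 1 by apply/andP; split; lra.
have := G2_convex _ _ _ t1 Nt1 l01; have := G2_convex _ _ _ t1 Nt1 l'01.
have -> : (1 - l) * t + (1 - (1 - l)) * - t = - s by rewrite /l; field.
have -> : l * t + (1 - l) * - t = s by rewrite /l; field.
lra.
Qed.

Lemma deriv_even_sum_div_le (a b : R) : 0 < a -> a < b -> b < 1 -> F1 a / a <= F1 b / b.
Proof.
move=> a_gt0 ab b_lt.
have zero_gt : -1 < 0 :> R by lra.
have a_lt : a < 1 by lra.
have a_gt : -1 < a by lra.
have [c1 /andP[? ?] F1a] := MVT_unit_itv zero_gt a_gt0 a_lt is_derive_deriv_even_sum.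
have [c2 /andP[? ?] F1ab] := MVT_unit_itv a_gt ab b_lt is_derive_deriv_even_sum.
rewrite subr0 oppr0 subrr subr0 in F1a.
have : F2 c1 <= F2 c2 by apply: second_deriv_even_sum_le; lra.
rewrite F1a mulfK ?gt_eqF // ler_pdivlMr; last lra.
have -> : F1 b = F2 c1 * a + F2 c2 * (b - a) by lra.
nra.
Qed.

(* [F t - K t^2] is minimal at [c] on [[0, 1)]: its derivative is
   [t (F1 t / t - F1 c / c)] with [K = F1 c / (2 c)]. *)
Lemma even_sum_ge_parabola_nonneg (c t : R) : 0 < c < 1 -> 0 <= t < 1 ->
  F c + F1 c / (2 * c) * (t ^+ 2 - c ^+ 2) <= F t.
Proof.
move=> /andP[c_gt0 c_lt] /andP[t_ge0 t_lt].
pose K := F1 c / (2 * c).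
pose H x := F x - K * (x * x).
have dH (x : R) : -1 < x < 1 -> is_derive x 1 H (F1 x - K * (x + x)).
  move=> x1; have := is_deriveB (is_derive_even_sum _ x1)
    (is_deriveZ K (is_deriveM (is_derive_id x 1) (is_derive_id x 1))).
  by move/is_derive_eq; apply; rewrite /= !scaler1.
have dHE (x : R) : 0 < x -> F1 x - K * (x + x) = x * (F1 x / x - F1 c / c).
  by move=> x_gt0; rewrite /K; field; lra.
suff : H c <= H t by rewrite /H /K !expr2; lra.
have [tc|ct] := ltP t c.
- have t_gt : -1 < t by lra.
  have [x /andP[? ?] Hct] := MVT_unit_itv t_gt tc c_lt dH.
  rewrite -subr_ge0 -opprB Hct dHE; last lra.
  rewrite -mulNr -mulrN opprB mulr_ge0 ?subr_ge0 ?(ltW tc) // mulr_ge0 //; first lra.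
  by rewrite subr_ge0; apply: deriv_even_sum_div_le; lra.
- rewrite le_eqVlt in ct; case/predU1P: ct => [->//|ct].
  have c_gt : -1 < c by lra.
  have [x /andP[? ?] Htc] := MVT_unit_itv c_gt ct t_lt dH.
  rewrite -subr_ge0 Htc dHE; last lra.
  rewrite mulr_ge0 ?subr_ge0 ?(ltW ct) // mulr_ge0 //; first lra.
  by rewrite subr_ge0; apply: deriv_even_sum_div_le; lra.
Qed.

Lemma even_sum_ge_parabola (c : R) : 0 < c < 1 -> exists K, forall t : R,
  -1 < t < 1 -> G c + G (- c) + K * (t ^+ 2 - c ^+ 2) <= G t + G (- t).
Proof.
move=> c01; exists (F1 c / (2 * c)) => t /andP[t_gt t_lt].
have [t_ge0|t_lt0] := leP 0 t; first by apply: even_sum_ge_parabola_nonneg; rewrite ?t_ge0.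
have := even_sum_ge_parabola_nonneg c (- t) c01.
by rewrite sqrrN opprK [G (- t) + _]addrC; apply; apply/andP; split; lra.
Qed.

End ConvexSecondDerivative.

Section EndpointLimits.
Import numFieldNormedType.Exports.
Context {R : realType}.

Lemma cvg_at_left_itv (T : topologicalType) (f : R -> T) (a b : R) : a < b ->
  {within `[a, b], continuous f} -> f @ b^'- --> f b.
Proof.
move=> ab f_cont; have fb := (proj1 (subspace_continuousP _ _) f_cont) b.
have /fb : `[a, b]%classic b by rewrite /= in_itv /= lexx (ltW ab).
apply: cvg_trans; apply: cvg_app => U; rewrite !nbhs_simpl => U_near.
have U_side := @cvg_within _ (nbhs b) _ (fun t => t < b) _ U_near.
near=> t; apply: (near (U_side _) t) => //; rewrite /= in_itv /=.
by apply/andP; split; apply: ltW; near: t; [exact: nbhs_left_gt | exact: nbhs_left_lt].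
Unshelve. all: by end_near.
Qed.

Lemma cvg_at_right_itv (T : topologicalType) (f : R -> T) (a b : R) : a < b ->
  {within `[a, b], continuous f} -> f @ a^'+ --> f a.
Proof.
move=> ab f_cont; have fa := (proj1 (subspace_continuousP _ _) f_cont) a.
have /fa : `[a, b]%classic a by rewrite /= in_itv /= lexx (ltW ab).
apply: cvg_trans; apply: cvg_app => U; rewrite !nbhs_simpl => U_near.
have U_side := @cvg_within _ (nbhs a) _ (fun t => a < t) _ U_near.
near=> t; apply: (near (U_side _) t) => //; rewrite /= in_itv /=.
by apply/andP; split; apply: ltW; near: t; [exact: nbhs_right_gt | exact: nbhs_right_lt].
Unshelve. all: by end_near.
Qed.

Lemma even_sum_ge_parabola_at1 {g : R -> \bar R} {M K : R} :
  {within `[-1, 1], continuous g} -> g (-1) \is a fin_num ->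
  (forall t : R, -1 < t < 1 -> ((M + K * t ^+ 2)%:E <= g t + g (- t)%R)%E) ->
  ((M + K)%:E <= g 1%R + g (-1)%R)%E.
Proof.
move=> g_cont gN1_fin g_ge.
have N11 : (-1 : R) < 1 by lra.
apply: (lee_cvg_to (a := 1^'-) (f := fun t : R => (M + K * t ^+ 2)%:E)
                   (g := fun t => g t + g (- t)%R)%E).
- apply: cvg_EFin; first by near=> t.
  rewrite -[X in M + X]mulr1 -[X in K * X](expr1n _ 2); apply: cvg_at_left_filter.
  apply: cvgD; first exact: cvg_cst.
  by apply: cvgM; [exact: cvg_cst | exact: exprn_continuous].
- apply: cvgeD; first exact: fin_num_adde_defl.
    exact: cvg_at_left_itv g_cont.
  apply/cvg_at_leftNP; have -> : (fun t => g (- t)) \o -%R = g.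
    by apply: funext => t /=; rewrite opprK.
  exact: cvg_at_right_itv g_cont.
- near=> t; apply: g_ge; apply/andP; split; near: t;
    [exact: nbhs_left_gt | exact: nbhs_left_lt].
Unshelve. all: by end_near.
Qed.

End EndpointLimits.

Section EvenPotential.
Context {R : realType} {g : R -> \bar R}.
Hypothesis g_fin : forall t : R, -1 <= t < 1 -> g t \is a fin_num.
Hypothesis g_cont : {within `[-1, 1], continuous g}.
Hypothesis dg : forall t : R, -1 < t < 1 -> derivable (greal g) t 1.
Hypothesis dg1 : forall t : R, -1 < t < 1 -> derivable (derive1 (greal g)) t 1.
Hypothesis g2_convex : forall x y l : R, -1 < x < 1 -> -1 < y < 1 -> 0 <= l <= 1 ->
  derive1n 2 (greal g) (l * x + (1 - l) * y)
    <= l * derive1n 2 (greal g) x + (1 - l) * derive1n 2 (greal g) y.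
Hypothesis g2_gt0 : forall t : R, -1 < t < 1 -> 0 < derive1n 2 (greal g) t.

Local Notation G := (greal g).

Let is_derive_G (t : R) : -1 < t < 1 -> is_derive t 1 G (derive1 G t).
Proof. by move=> t1; apply: DeriveDef; [exact: dg | rewrite derive1E]. Qed.

Let is_derive_G1 (t : R) : -1 < t < 1 ->
  is_derive t 1 (derive1 G) (derive1n 2 G t).
Proof. by move=> t1; apply: DeriveDef; [exact: dg1 | rewrite -derive1E]. Qed.

Lemma greal_fin {t : R} : -1 < t < 1 -> g t = (G t)%:E.
Proof. by case/andP=> ? ?; rewrite /greal fineK // g_fin // ltW. Qed.

Lemma even_potential_lt (s t : R) : 0 <= s -> s < t -> t < 1 ->
  (g s + g (- s)%R < g t + g (- t)%R)%E.
Proof.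
move=> s_ge0 st t_lt.
have [s1 Ns1] : -1 < s < 1 /\ -1 < - s < 1 by split; apply/andP; split; lra.
have [t1 Nt1] : -1 < t < 1 /\ -1 < - t < 1 by split; apply/andP; split; lra.
rewrite (greal_fin s1) (greal_fin Ns1) (greal_fin t1) (greal_fin Nt1).
by rewrite -!EFinD lte_fin (even_sum_lt is_derive_G is_derive_G1 g2_gt0).
Qed.

Lemma even_potential_ge_parabola (c : R) : 0 < c < 1 -> exists K : R,
  forall t : R, -1 <= t <= 1 ->
    ((G c + G (- c) + K * (t ^+ 2 - c ^+ 2))%:E <= g t + g (- t)%R)%E.
Proof.
move=> c01; have [K G_ge] := even_sum_ge_parabola is_derive_G is_derive_G1 g2_convex c c01.
exists K; set M := G c + G (- c) - K * c ^+ 2.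
have interior (t : R) : -1 < t < 1 -> ((M + K * t ^+ 2)%:E <= g t + g (- t)%R)%E.
  move=> t1; have Nt1 : -1 < - t < 1 by case/andP: t1 => ? ?; apply/andP; split; lra.
  rewrite (greal_fin t1) (greal_fin Nt1) -EFinD lee_fin /M.
  by have := G_ge t t1; lra.
have gN1_fin : g (-1) \is a fin_num by rewrite g_fin // lexx; lra.
have at1 := even_sum_ge_parabola_at1 g_cont gN1_fin interior.
move=> t /andP[t_ge t_le].
have -> : G c + G (- c) + K * (t ^+ 2 - c ^+ 2) = M + K * t ^+ 2 by rewrite /M; ring.
have [->|t_neq1] := eqVneq t 1; first by rewrite expr1n mulr1.
have [->|t_neqN1] := eqVneq t (-1); first by rewrite sqrrN expr1n mulr1 opprK addeC.
by apply: interior; rewrite !lt_neqAle t_ge t_le t_neq1 eq_sym t_neqN1.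
Qed.

End EvenPotential.

Section InverseSqrtNat.
Context {R : realType}.

Lemma invf_sqrt_natr_le1 n : (0 < n)%N -> (Num.sqrt (n%:R : R))^-1 <= 1.
Proof.
by move=> n_gt0; rewrite invf_le1 ?sqrtr_gt0 ?ltr0n // -{1}sqrtr1 ler_sqrt ?ler1n.
Qed.

Lemma invf_sqrt_natr_lt1 n : (1 < n)%N -> (Num.sqrt (n%:R : R))^-1 < 1.
Proof.
move=> n_gt1; have n_gt0 : (0 < n)%N := ltnW n_gt1.
by rewrite invf_lt1 ?sqrtr_gt0 ?ltr0n // -{1}sqrtr1 ltr_sqrt ?ltr1n ?ltr0n.
Qed.

Lemma sqr_invf_sqrt_natr n : (0 < n)%N -> (Num.sqrt (n%:R : R))^-1 ^+ 2 * n%:R = 1.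
Proof. by move=> n_gt0; rewrite exprVn sqr_sqrtr ?ler0n // mulVf // pnatr_eq0 -lt0n. Qed.

End InverseSqrtNat.

Section DotProduct.
Context {R : realType} {d : nat}.
Implicit Types x y z : 'rV[R]_d.

Lemma dotvE x y : dotv x y = (x *m y^T) 0 0.
Proof. by rewrite mxE; apply: eq_bigr => i _; rewrite mxE. Qed.

Lemma dotvC x y : dotv x y = dotv y x.
Proof. by apply: eq_bigr => i _; rewrite mulrC. Qed.

Lemma dotvDl x y z : dotv (x + y) z = dotv x z + dotv y z.
Proof. by rewrite /dotv -big_split; apply: eq_bigr => i _; rewrite mxE mulrDl. Qed.

Lemma dotvDr x y z : dotv x (y + z) = dotv x y + dotv x z.
Proof. by rewrite dotvC dotvDl !(dotvC x). Qed.

Lemma dotvZl (k : R) x y : dotv (k *: x) y = k * dotv x y.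
Proof. by rewrite /dotv mulr_sumr; apply: eq_bigr => i _; rewrite mxE mulrA. Qed.

Lemma dotvZr (k : R) x y : dotv x (k *: y) = k * dotv x y.
Proof. by rewrite dotvC dotvZl dotvC. Qed.

Lemma dotvNl x y : dotv (- x) y = - dotv x y.
Proof. by rewrite -scaleN1r dotvZl mulN1r. Qed.

Lemma dotvNr x y : dotv x (- y) = - dotv x y.
Proof. by rewrite dotvC dotvNl dotvC. Qed.

Lemma dotvBl x y z : dotv (x - y) z = dotv x z - dotv y z.
Proof. by rewrite dotvDl dotvNl. Qed.

Lemma dotv0l y : dotv 0 y = 0.
Proof. by rewrite -(scale0r 0) dotvZl mul0r. Qed.

Lemma dotv_suml (I : Type) (r : seq I) (P : pred I) (F : I -> 'rV[R]_d) y :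
  dotv (\sum_(i <- r | P i) F i) y = \sum_(i <- r | P i) dotv (F i) y.
Proof. by elim/big_rec2: _ => [|i u v _ <-]; rewrite ?dotv0l ?dotvDl. Qed.

Lemma dotv_ge0 x : 0 <= dotv x x.
Proof. by apply: sumr_ge0 => i _; rewrite -expr2 sqr_ge0. Qed.

Lemma dotv_gt0 x : x != 0 -> 0 < dotv x x.
Proof.
apply: contraNT; rewrite -leNgt => x_le0; apply/eqP/rowP => j; rewrite mxE.
have : dotv x x == 0 by rewrite eq_le x_le0 dotv_ge0.
rewrite /dotv psumr_eq0 => [/allP/(_ j (mem_index_enum _))|i _]; last first.
  by rewrite -expr2 sqr_ge0.
by rewrite implyTb mulf_eq0 orbb => /eqP.
Qed.

Lemma dotv_normalize x : x != 0 ->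
  dotv ((Num.sqrt (dotv x x))^-1 *: x) ((Num.sqrt (dotv x x))^-1 *: x) = 1.
Proof.
move=> /dotv_gt0 x_gt0; rewrite dotvZl dotvZr mulrA -expr2 exprVn sqr_sqrtr ?ltW //.
by rewrite mulVf // gt_eqF.
Qed.

End DotProduct.

Section OrthonormalFrames.
Context {R : realType} {d : nat}.
Implicit Types (x : 'rV[R]_d) (a z : 'I_d -> 'rV[R]_d).

Definition orthonormal {n} (a : 'I_n -> 'rV[R]_d) : Prop :=
  forall i j, dotv (a i) (a j) = (i == j)%:R.

Lemma exists_signs_dotv_sum_ge n (z : 'I_n -> 'rV[R]_d) : exists e : 'I_n -> R,
  (forall j, e j = 1 \/ e j = -1) /\
  \sum_j dotv (z j) (z j) <= dotv (\sum_j e j *: z j) (\sum_j e j *: z j).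
Proof.
elim: n z => [|n IHn] z.
  by exists (fun=> 1); split=> [j|]; [left | rewrite !big_ord0 dotv0l].
have [e [e_sign e_ge]] := IHn (fun j => z (lift ord0 j)).
set v := \sum_j e j *: z (lift ord0 j) in e_ge.
pose s : R := if 0 <= dotv v (z ord0) then 1 else -1.
exists (fun j => if unlift ord0 j is Some k then e k else s); split.
  move=> j; case: (unlift ord0 j) => [k|]; first exact: e_sign.
  by rewrite /s; case: ifP; [left | right].
rewrite !big_ord_recl unlift_none.
rewrite (eq_bigr (fun j => e j *: z (lift ord0 j))) => [|j _]; last by rewrite liftK.
rewrite -/v !dotvDl !dotvDr !dotvZl !dotvZr (dotvC (z ord0) v).
have s_sqr : s * (s * dotv (z ord0) (z ord0)) = dotv (z ord0) (z ord0).
  by rewrite mulrA /s; case: ifP; rewrite ?mulr1 ?mulrNN ?mul1r.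
have s_dotv : 0 <= s * dotv v (z ord0).
  by rewrite /s; case: ifP => [|/negbT]; rewrite ?mul1r // mulN1r oppr_ge0 -ltNge => /ltW.
lra.
Qed.

Local Notation frame a := (\matrix_i a i : 'M[R]_d).

Lemma dotv_frame a x i : dotv x (a i) = (x *m (frame a)^T) 0 i.
Proof. by rewrite mxE; apply: eq_bigr => j _; rewrite !mxE. Qed.

Lemma orthonormal_sum_dotv_sqr a x : orthonormal a ->
  \sum_k dotv x (a k) ^+ 2 = dotv x x.
Proof.
move=> a_on.
have aaT : frame a *m (frame a)^T = 1%:M.
  by apply/matrixP => i j; rewrite !mxE -a_on; apply: eq_bigr => k _; rewrite !mxE.
have -> : \sum_k dotv x (a k) ^+ 2 = dotv (x *m (frame a)^T) (x *m (frame a)^T).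
  by apply: eq_bigr => k _; rewrite dotv_frame expr2.
by rewrite !dotvE trmx_mul trmxK -!mulmxA (mulmxA (frame a)^T) (mulmx1C aaT) mul1mx.
Qed.

Lemma orthonormal_dotv_sqr_le a x k : orthonormal a -> dotv x (a k) ^+ 2 <= dotv x x.
Proof.
move=> a_on; rewrite -(orthonormal_sum_dotv_sqr a x a_on) (bigD1 k) //= lerDl.
by apply: sumr_ge0 => i _; exact: sqr_ge0.
Qed.

Lemma frame_kernel a : \det (frame a) = 0 ->
  exists2 v, v != 0 & forall i, dotv v (a i) = 0.
Proof.
rewrite -det_tr => /eqP/det0P[v v_neq0 vaT]; exists v => // i.
by rewrite dotv_frame vaT mxE.
Qed.

Lemma frame_dual a : \det (frame a) != 0 ->
  exists z : 'I_d -> 'rV[R]_d, forall i j, dotv (a i) (z j) = (i == j)%:R.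
Proof.
move=> det_neq0; have a_unit : frame a \in unitmx by rewrite unitmxE unitfE.
exists (fun j => \row_k invmx (frame a) k j) => i j.
have := congr1 (fun M : 'M[R]_d => M i j) (mulmxV a_unit); rewrite !mxE => <-.
by apply: eq_bigr => k _; rewrite !mxE.
Qed.

(* [|z_j|^2 = 1 + |z_j - a_j|^2] because [a_j . z_j = 1 = |a_j|^2]. *)
Lemma dual_sum_dotv_gt a z : (forall i, dotv (a i) (a i) = 1) ->
  (forall i j, dotv (a i) (z j) = (i == j)%:R) -> ~ orthonormal a ->
  d%:R < \sum_j dotv (z j) (z j).
Proof.
move=> a_unit az not_on.
have -> : \sum_j dotv (z j) (z j) = d%:R + \sum_j dotv (z j - a j) (z j - a j).
  have -> : (d%:R : R) = \sum_(j < d) 1 by rewrite sumr_const card_ord.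
  rewrite -big_split /=; apply: eq_bigr => j _.
  rewrite !dotvBl !dotvDr !dotvNr (dotvC (z j) (a j)) az a_unit eqxx /=; lra.
have [j z_neq_a] : exists j, z j != a j.
  apply: contrapT => /forallNP z_eq_a; apply: not_on => i j.
  by rewrite -az; move/negP/negbNE/eqP: (z_eq_a j) => ->.
rewrite ltrDl (bigD1 j) //=; apply: ltr_pwDl; first by rewrite dotv_gt0 ?subr_eq0.
by apply: sumr_ge0 => k _; exact: dotv_ge0.
Qed.

Lemma not_orthonormal_short_point a : (0 < d)%N ->
  (forall i, dotv (a i) (a i) = 1) -> ~ orthonormal a ->
  exists x s, [/\ dotv x x = 1, 0 <= s, s < (Num.sqrt d%:R)^-1 &
    forall i, dotv x (a i) = s \/ dotv x (a i) = - s].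
Proof.
move=> d_gt0 a_unit not_on.
have [det0|det_neq0] := eqVneq (\det (frame a)) 0.
  have [v v_neq0 va] := frame_kernel a det0.
  exists ((Num.sqrt (dotv v v))^-1 *: v), 0; split.
  - exact: dotv_normalize.
  - by [].
  - by rewrite invr_gt0 sqrtr_gt0 ltr0n.
  - by move=> i; left; rewrite dotvZl va mulr0.
have [z az] := frame_dual a det_neq0.
have [e [e_sign e_ge]] := exists_signs_dotv_sum_ge _ z.
set v := \sum_j e j *: z j in e_ge.
have v_gt : d%:R < dotv v v := lt_le_trans (dual_sum_dotv_gt a z a_unit az not_on) e_ge.
have v_neq0 : v != 0 by apply: contraTneq v_gt => ->; rewrite dotv0l -leNgt ler0n.
have va i : dotv v (a i) = e i.
  rewrite dotv_suml (bigD1 i) //= dotvZl dotvC az eqxx mulr1 big1 ?addr0 // => j j_neq.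
  by rewrite dotvZl dotvC az eq_sym (negPf j_neq) mulr0.
exists ((Num.sqrt (dotv v v))^-1 *: v), (Num.sqrt (dotv v v))^-1; split.
- exact: dotv_normalize.
- by rewrite invr_ge0 sqrtr_ge0.
- have d_pos : (0 : R) < d%:R by rewrite ltr0n.
  by rewrite ltf_pV2 ?posrE ?sqrtr_gt0 ?ltr_sqrt // (lt_trans d_pos).
- by move=> i; rewrite dotvZl va; case: (e_sign i) => ->; [left | right];
    rewrite ?mulr1 ?mulrN1.
Qed.

End OrthonormalFrames.

Section AntipodalConfigurations.
Context {R : realType} {d : nat}.
Implicit Types (x y : 'rV[R]_d) (w : seq 'rV[R]_d) (g : R -> \bar R) (a : 'I_d -> 'rV[R]_d).

Lemma antipodal_split w : antipodal w -> {in w, forall x, x != 0} ->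
  exists ys, perm_eq w (ys ++ map -%R ys).
Proof.
move: {2}(size w) (leqnn (size w)) => n; elim: n w => [|n IHn] w.
  by rewrite leqn0 => /nilP -> _ _; exists [::].
case: w => [|y w] w_size w_anti w_nz; first by exists [::].
have Ny_in : - y \in w.
  have : - y \in map -%R (y :: w) by rewrite map_f ?mem_head.
  rewrite -(perm_mem w_anti) inE => /predU1P[/eqP|//].
  rewrite eq_sym -subr_eq0 opprK -mulr2n -scaler_nat scaler_eq0 pnatr_eq0 /=.
  by rewrite (negPf (w_nz _ (mem_head _ _))).
set w' := rem (- y) w.
have w_perm : perm_eq w (- y :: w') := perm_to_rem Ny_in.
have w'_anti : antipodal w'.
  have : perm_eq (y :: - y :: w') (- y :: y :: map -%R w').
    have -> : - y :: y :: map -%R w' = map -%R (y :: - y :: w') by rewrite /= opprK.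
    apply: perm_trans (perm_trans _ w_anti) (perm_map _ _); rewrite perm_cons //.
    by rewrite perm_sym.
  by rewrite -[y :: _]/([:: y] ++ [:: - y] ++ w') perm_catCA /= !perm_cons.
have [ys ys_perm] : exists ys, perm_eq w' (ys ++ map -%R ys).
  apply: IHn => //.
  - by rewrite size_rem // -ltnS (leq_trans _ w_size) // ltnS leq_pred.
  - by move=> x /mem_rem x_in; apply: w_nz; rewrite inE x_in orbT.
exists (y :: ys); rewrite /= perm_cons; apply: perm_trans w_perm _.
rewrite -[ys ++ _]/(ys ++ [:: - y] ++ map -%R ys) perm_sym perm_catCA /=.
by rewrite perm_cons perm_sym.
Qed.

Local Notation plus_minus a := ([seq a k | k <- enum 'I_d] ++ [seq - a k | k <- enum 'I_d]).

Lemma antipodal_plus_minus w :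
  size w = (2 * d)%N -> antipodal w -> {in w, forall x, x != 0} ->
  exists a : 'I_d -> 'rV[R]_d, perm_eq w (plus_minus a).
Proof.
move=> w_size w_anti w_nz; have [ys ys_perm] := antipodal_split _ w_anti w_nz.
have ys_size : size ys = d.
  by move: (perm_size ys_perm); rewrite size_cat size_map w_size addnn mul2n => /double_inj.
have ysE : [seq ys`_k | k : 'I_d <- enum 'I_d] = ys.
  by rewrite -[RHS](mkseq_nth 0) ys_size /mkseq -val_enum_ord -map_comp.
exists (fun k => ys`_k); rewrite ysE.
by rewrite -[in map _ ys]ysE -map_comp in ys_perm.
Qed.

Lemma sum_plus_minus g a w x : perm_eq w (plus_minus a) ->
  (\sum_(y <- w) g (dotv x y) = \sum_(k < d) (g (dotv x (a k)) + g (- dotv x (a k))%R))%E.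
Proof.
move=> w_perm; rewrite (perm_big _ w_perm) big_cat !big_map big_split /= -enumT.
by congr (_ + _)%E; rewrite big_enum; apply: eq_bigr => k _; rewrite ?dotvNr.
Qed.

Lemma cross_polytope_polarization g a w (c Fc K : R) :
  orthonormal a -> perm_eq w (plus_minus a) -> c ^+ 2 * d%:R = 1 ->
  (g c + g (- c)%R = Fc%:E)%E ->
  (forall t : R, -1 <= t <= 1 -> ((Fc + K * (t ^+ 2 - c ^+ 2))%:E <= g t + g (- t)%R)%E) ->
  polarization g w = (d%:R * Fc)%:E.
Proof.
move=> a_on w_perm c_sqr gc g_ge; apply/eqP; rewrite eq_le; apply/andP; split.
- pose x0 := c *: \sum_k a k.
  have x0a i : dotv x0 (a i) = c.
    rewrite dotvZl dotv_suml (bigD1 i) //= a_on eqxx big1 ?addr0 ?mulr1 // => j j_neq.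
    by rewrite a_on (negPf j_neq).
  apply: ereal_inf_lbound; exists x0.
    rewrite /sphere /= {1}/x0 dotvZl dotv_suml (eq_bigr (fun=> c)) => [|k _].
      by rewrite sumr_const card_ord -mulr_natr mulrA -expr2.
    by rewrite dotvC x0a.
  rewrite (sum_plus_minus _ _ _ _ w_perm) (eq_bigr (fun=> Fc%:E)) => [|k _]; last first.
    by rewrite x0a.
  by rewrite sumEFin sumr_const card_ord mulr_natl.
- apply: le_ereal_inf_tmp => _ [x x_sph <-]; rewrite (sum_plus_minus _ _ _ _ w_perm).
  have dot_range k : -1 <= dotv x (a k) <= 1.
    have := orthonormal_dotv_sqr_le a x k a_on; rewrite x_sph => dot_le1.
    by apply/andP; split; nra.
  apply: le_trans; last exact: lee_sum (fun k _ => g_ge _ (dot_range k)).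
  rewrite sumEFin lee_fin big_split /= -mulr_sumr sumrB.
  rewrite orthonormal_sum_dotv_sqr // x_sph !sumr_const !card_ord.
  by rewrite -[c ^+ 2 *+ d]mulr_natr c_sqr subrr mulr0 addr0 mulr_natl.
Qed.

Lemma polarization_lt_not_cross_polytope g w (Fc : R) : (0 < d)%N ->
  size w = (2 * d)%N -> {in w, forall x, sphere x} -> antipodal w ->
  ~ cross_polytope w -> (forall t : R, -1 < t < 1 -> g t \is a fin_num) ->
  (forall s : R, 0 <= s < (Num.sqrt d%:R)^-1 -> (g s + g (- s)%R < Fc%:E)%E) ->
  (polarization g w < (d%:R * Fc)%:E)%E.
Proof.
move=> d_gt0 w_size w_sph w_anti not_cross g_fin g_lt.
have w_nz : {in w, forall x, x != 0}.
  move=> x /w_sph; apply: contraPneq => ->.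
  by rewrite /sphere /= dotv0l => /esym/eqP; rewrite oner_eq0.
have [a w_perm] := antipodal_plus_minus w w_size w_anti w_nz.
have a_unit i : dotv (a i) (a i) = 1.
  by apply: w_sph; rewrite (perm_mem w_perm) mem_cat map_f ?mem_enum.
have not_on : ~ orthonormal a by move=> a_on; apply: not_cross; exists a.
have [x [s [x_sph s_ge0 s_lt xa]]] := not_orthonormal_short_point a d_gt0 a_unit not_on.
apply: (@le_lt_trans _ _ (\sum_(y <- w) g (dotv x y))%E).
  by apply: ereal_inf_lbound; exists x.
have s1 : 0 <= s < (Num.sqrt d%:R)^-1 by rewrite s_ge0.
have s_lt1 : s < 1 := lt_le_trans s_lt (invf_sqrt_natr_le1 d d_gt0).
have gs_fin : (g s + g (- s)%R)%E \is a fin_num.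
  by rewrite fin_numD !g_fin //; apply/andP; split; lra.
rewrite (sum_plus_minus _ _ _ _ w_perm).
rewrite (eq_bigr (fun=> (fine (g s + g (- s)%R))%:E)) => [|k _].
  rewrite sumEFin sumr_const card_ord lte_fin mulr_natl ltr_pMn2r //.
  by rewrite -lte_fin fineK // g_lt.
by rewrite fineK //; case: (xa k) => ->; rewrite ?opprK // addeC.
Qed.

End AntipodalConfigurations.

Theorem corollary3p4 (R : realType) (d : nat) (g : R -> \bar R)
  (hd : (2 <= d)%N)
  (hfin : forall t : R, -1 <= t < 1 -> g t \is a fin_num)
  (h1 : g 1 != -oo%E)
  (hcont : {within `[-1, 1], continuous g})
  (hder1 : forall t : R, -1 < t < 1 -> derivable (greal g) t 1)
  (hder2 : forall t : R, -1 < t < 1 -> derivable (derive1 (greal g)) t 1)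
  (hconv : forall (x y l : R), -1 < x < 1 -> -1 < y < 1 -> 0 <= l <= 1 ->
     (derive1n 2 (greal g)) (l * x + (1 - l) * y)
       <= l * (derive1n 2 (greal g)) x + (1 - l) * (derive1n 2 (greal g)) y)
  (hpos : forall t : R, -1 < t < 1 -> 0 < (derive1n 2 (greal g)) t)
  (w : seq 'rV[R]_d)
  (hsize : size w = (2 * d)%N)
  (hsph : forall x, x \in w -> @sphere R d x)
  (hanti : antipodal w) :
  polarization g w
    = ((d%:R)%:E * (g ((Num.sqrt d%:R)^-1)%R + g (- (Num.sqrt d%:R)^-1)%R))%E
  <-> cross_polytope w.
Proof.
have d_gt0 : (0 < d)%N by apply: ltnW.
set c := (Num.sqrt d%:R)^-1.
have c01 : 0 < c < 1 by rewrite invr_gt0 sqrtr_gt0 ltr0n d_gt0 invf_sqrt_natr_lt1.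
have g_fin (t : R) : -1 < t < 1 -> g t \is a fin_num.
  by case/andP=> t_gt t_lt; rewrite hfin // (ltW t_gt).
have [c1 Nc1] : -1 < c < 1 /\ -1 < - c < 1 by split; apply/andP; split; lra.
pose Fc := greal g c + greal g (- c).
have gc : (g c + g (- c)%R = Fc%:E)%E by rewrite EFinD -!greal_fin.
rewrite gc -EFinM.
have [K g_ge] := even_potential_ge_parabola hfin hcont hder1 hder2 hconv c c01.
split=> [P_eq | [a [a_on w_perm]]].
- apply: contrapT => not_cross.
  suff : (polarization g w < (d%:R * Fc)%:E)%E by rewrite P_eq ltxx.
  apply: polarization_lt_not_cross_polytope d_gt0 hsize hsph hanti not_cross g_fin _.
  move=> s /andP[s_ge0 s_lt].
  by rewrite -gc (even_potential_lt hfin hder1 hder2 hpos) // (andP c01).2.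
- exact: cross_polytope_polarization a_on w_perm (sqr_invf_sqrt_natr d d_gt0) gc g_ge.
Qed.
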